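(* Let $v_1,\dots,v_N\in S^{n-1}$ ($N\ge 2$) be in general position in dimension $n$. There exists a constant $c_0>0$ depending only on $n$ and $v_1,\dots,v_N$ such that the following holds: for any $1\le i_1<i_2\le N$, any $R>0$, and any two $(n-1)$-dimensional Euclidean balls $B_1^{n-1},B_2^{n-1}$ of radius $R$ with $B_1^{n-1}$ lying in a hyperplane orthogonal to $v_{i_1}$ and $B_2^{n-1}$ lying in a hyperplane orthogonal to $v_{i_2}$, the set $K=\mathrm{conv}\{B_1^{n-1},B_2^{n-1}\}$ contains a ball $B(x_0,c_0R)$ for some $x_0\in\mathrm{int}\,K$.
   Context: Unit vectors $v_1,\dots,v_N\in\mathbb R^n$ are in general position in dimension $n$ if any $n$ of them are linearly independent (in particular no two are parallel). $B(x,r)$ denotes the closed Euclidean ball in $\mathbb R^n$ with center $x$ and radius $r$. *)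

From HB Require Import structures.
From mathcomp Require Import all_boot all_order all_algebra.
From mathcomp Require Import reals.
Set Implicit Arguments. Unset Strict Implicit. Unset Printing Implicit Defensive.
Import Order.TTheory GRing.Theory Num.Theory.
Local Open Scope ring_scope.

Section Defs.
Variables (R : realType) (n : nat).
Notation vec := 'rV[R]_n.

Definition dot (u v : vec) : R := \sum_(i < n) u 0 i * v 0 i.

Definition unit_vec (v : vec) : Prop := dot v v = 1.

Definition cball (x : vec) (r : R) : vec -> Prop :=
  fun y => dot (y - x) (y - x) <= r ^+ 2.

Definition lin_indep k (w : 'I_k -> vec) : Prop :=
  forall a : 'I_k -> R, \sum_(i < k) a i *: w i = 0 -> forall i, a i = 0.

(* general position in dimension n: any n of them linearly independent,
   and (as stated in the context) no two of them parallel *)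
Definition general_position N (v : 'I_N -> vec) : Prop :=
  (forall f : 'I_n -> 'I_N, injective f -> lin_indep (fun i => v (f i))) /\
  (forall i j : 'I_N, i != j -> lin_indep (fun k : 'I_2 => if k == ord0 then v i else v j)).

Definition hball (u c : vec) (r : R) : vec -> Prop :=
  fun y => dot (y - c) u = 0 /\ cball c r y.

Definition conv (A : vec -> Prop) : vec -> Prop :=
  fun x => exists (k : nat) (w : 'I_k -> R) (p : 'I_k -> vec),
    (forall i, 0 <= w i) /\ \sum_(i < k) w i = 1 /\ (forall i, A (p i)) /\
    x = \sum_(i < k) w i *: p i.

Definition interior (A : vec -> Prop) : vec -> Prop :=
  fun x => exists r : R, 0 < r /\ forall y, cball x r y -> A y.

End Defs.

From HB Require Import structures.
From mathcomp Require Import all_boot all_order all_algebra.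
From mathcomp Require Import reals.
From mathcomp Require Import ring lra.
Import Order.TTheory GRing.Theory Num.Theory.
Local Open Scope ring_scope.

(* For unit vectors u, w
   with s = <u, w> and d = 1 - s^2 > 0, every z splits as z = a + b with a
   orthogonal to u and b = (<z,u>/d) (u - s w) orthogonal to w, and
   d |b|^2 = <z,u>^2 <= |z|^2.  Hence if |y - (c1 + c2)/2| <= sqrt(d) r / 4,
   writing 2 (y - (c1 + c2)/2) = a + b gives |a|, |b| <= r, so y is the
   midpoint of c1 + a in the first disc and c2 + b in the second.  Taking
   for e the minimum of d over the finitely many pairs, c0 = e / 4 works
   since e <= 1. *)

Section ConvexHullOfDiscs.
Context {R : realType} {n : nat}.
Implicit Types (u v w x y z p q : 'rV[R]_n).

Lemma dotC u v : dot u v = dot v u.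
Proof. by apply: eq_bigr => i _; rewrite mulrC. Qed.

Lemma dotDl u v w : dot (u + v) w = dot u w + dot v w.
Proof. by rewrite /dot -big_split; apply: eq_bigr => i _; rewrite mxE mulrDl. Qed.

Lemma dotZl (k : R) u v : dot (k *: u) v = k * dot u v.
Proof. by rewrite /dot mulr_sumr; apply: eq_bigr => i _; rewrite mxE mulrA. Qed.

Lemma dotBl u v w : dot (u - v) w = dot u w - dot v w.
Proof. by rewrite dotDl -scaleN1r dotZl mulN1r. Qed.

Lemma dotZr (k : R) u v : dot v (k *: u) = k * dot v u.
Proof. by rewrite dotC dotZl dotC. Qed.

Lemma dotBr u v w : dot w (u - v) = dot w u - dot w v.
Proof. by rewrite dotC dotBl !(dotC w). Qed.

Lemma dotDr u v w : dot w (u + v) = dot w u + dot w v.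
Proof. by rewrite dotC dotDl !(dotC w). Qed.

Lemma dot_ge0 u : 0 <= dot u u.
Proof. by apply: sumr_ge0 => i _; rewrite -expr2 sqr_ge0. Qed.

Lemma dot_eq0 u : dot u u = 0 -> u = 0.
Proof.
move=> u0; apply/rowP => j; rewrite mxE.
have : u 0 j * u 0 j = 0 by apply: (psumr_eq0P _ u0) => // i _; rewrite -expr2 sqr_ge0.
by move/eqP; rewrite mulf_eq0 orbb => /eqP.
Qed.

Lemma dotB_le x y : dot (x - y) (x - y) <= 2 * dot x x + 2 * dot y y.
Proof.
have := dot_ge0 (x + y).
rewrite dotBl !dotBr !dotDl !dotDr (dotC y x) => ?; lra.
Qed.

Lemma sqr_dot_unit_le z u : unit_vec u -> dot z u ^+ 2 <= dot z z.
Proof.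
rewrite /unit_vec => u1; have := dot_ge0 (z - dot z u *: u).
rewrite dotBl !dotBr !dotZl !dotZr u1 (dotC u z) -expr2 => ?; lra.
Qed.

Lemma sqr_dot_indep_lt1 u w : unit_vec u -> unit_vec w ->
  lin_indep (fun k : 'I_2 => if k == ord0 then u else w) ->
  dot u w ^+ 2 < 1.
Proof.
rewrite /unit_vec => u1 w1 indep; set s := dot u w.
have normE : dot (u - s *: w) (u - s *: w) = 1 - s ^+ 2.
  by rewrite dotBl !dotBr !dotZl !dotZr u1 w1 (dotC w u) -/s; ring.
rewrite -subr_gt0 lt_neqAle -normE dot_ge0 andbT; apply/negP => /eqP /esym.
move/dot_eq0; have := indep (fun j => if j == ord0 then 1 else - s).
rewrite !big_ord_recr big_ord0 /= add0r scale1r scaleNr => /[apply] /(_ ord0).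
by move/eqP; rewrite oner_eq0.
Qed.

Lemma dot_orth_split u w z : unit_vec u -> unit_vec w -> dot u w ^+ 2 < 1 ->
  exists a b, [/\ z = a + b, dot a u = 0, dot b w = 0
                & dot b b * (1 - dot u w ^+ 2) <= dot z z].
Proof.
rewrite /unit_vec => u1 w1; set s := dot u w; rewrite -subr_gt0 => d_gt0.
have d_neq0 : 1 - s ^+ 2 != 0 by rewrite gt_eqF.
pose b := (dot z u / (1 - s ^+ 2)) *: (u - s *: w).
exists (z - b), b; split; first by rewrite subrK.
- by rewrite dotBl /b dotZl dotBl dotZl u1 (dotC w u) -/s; field.
- by rewrite /b dotZl dotBl dotZl w1 -/s; ring.
have bbE : dot b b * (1 - s ^+ 2) = dot z u ^+ 2.
  by rewrite /b dotZl !dotZr dotBl !dotBr !dotZl !dotZr u1 w1 (dotC w u) -/s; field.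
by rewrite bbE sqr_dot_unit_le.
Qed.

Lemma conv_midpoint (A : 'rV[R]_n -> Prop) p q :
  A p -> A q -> conv A (2^-1 *: (p + q)).
Proof.
move=> Ap Aq; exists 2%N, (fun _ => 2^-1), (fun k => if k == ord0 then p else q).
split; first by move=> _; rewrite invr_ge0.
split; first by rewrite !big_ord_recr big_ord0 /=; field.
split; first by move=> k; case: ifP.
by rewrite !big_ord_recr big_ord0 /= add0r scalerDr.
Qed.

Lemma cball_sub_conv_hballs u w c1 c2 (r e : R) :
  unit_vec u -> unit_vec w -> 0 < e -> 16 * e ^+ 2 <= 1 - dot u w ^+ 2 ->
  forall y, cball (2^-1 *: (c1 + c2)) (e * r) y ->
    conv (fun p => hball u c1 r p \/ hball w c2 r p) y.
Proof.
move=> u1 w1 e_gt0 e_small y; rewrite /cball; set z := y - _ => zr.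
set d := 1 - dot u w ^+ 2 in e_small.
have d_gt0 : 0 < d by apply: lt_le_trans e_small; rewrite mulr_gt0 ?exprn_gt0.
have d_le1 : d <= 1 by rewrite /d lerBlDr lerDl sqr_ge0.
have [a [b [zE au0 bw0 bb_d_le]]] : exists a b, [/\ 2 *: z = a + b, dot a u = 0,
    dot b w = 0 & dot b b * d <= dot (2 *: z) (2 *: z)].
  by apply: dot_orth_split => //; rewrite -subr_gt0.
have zz_le : dot (2 *: z) (2 *: z) <= d * r ^+ 2 / 4.
  rewrite dotZl dotZr exprMn in zr *; nra.
have b_small : dot b b <= r ^+ 2 / 4.
  by rewrite -(ler_pM2r d_gt0); apply: le_trans bb_d_le _; lra.
have a_small : dot a a <= r ^+ 2.
  have -> : a = 2 *: z - b by rewrite zE addrK.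
  by apply: le_trans (dotB_le _ _) _; have := sqr_ge0 r; nra.
have -> : y = 2^-1 *: ((c1 + a) + (c2 + b)).
  by rewrite addrACA -zE scalerDr scalerA mulVf ?pnatr_eq0 // scale1r /z subrKC.
by apply: conv_midpoint; [left | right]; rewrite /hball /cball addrC addKr;
  split=> //; have := sqr_ge0 r; lra.
Qed.

Lemma finite_pos_lbound {I : finType} (P : pred I) (F : I -> R) :
  (forall i, P i -> 0 < F i) -> exists2 e, 0 < e & forall i, P i -> e <= F i.
Proof.
case: (pickP P) => [i0 Pi0 | P0] F_gt0; last by exists 1 => // i; rewrite P0.
by case: (arg_minP F Pi0) => i Pi minF; exists (F i); [apply: F_gt0 | apply: minF].
Qed.

End ConvexHullOfDiscs.

Theorem lemma3p3 (R : realType) (n N : nat) (v : 'I_N -> 'rV[R]_n) :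
  (2 <= N)%N ->
  (forall i, unit_vec (v i)) ->
  general_position v ->
  exists c0 : R, 0 < c0 /\
    forall (i1 i2 : 'I_N) (r : R) (c1 c2 : 'rV[R]_n),
      (i1 < i2)%N -> 0 < r ->
      let K := conv (fun y => hball (v i1) c1 r y \/ hball (v i2) c2 r y) in
      exists x0 : 'rV[R]_n, interior K x0 /\
        (forall y, cball x0 (c0 * r) y -> K y).
Proof.
move=> _ v1 [_ indep2].
have gram_gt0 (ij : 'I_N * 'I_N) :
    ij.1 != ij.2 -> 0 < 1 - dot (v ij.1) (v ij.2) ^+ 2.
  by case: ij => i j /= ij; rewrite subr_gt0; apply: sqr_dot_indep_lt1; auto.
have [e e_gt0 e_le] := finite_pos_lbound _ _ gram_gt0.
have c0_gt0 : 0 < e / 4 by rewrite divr_gt0.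
exists (e / 4); split=> // i1 i2 r c1 c2 lt12 r_gt0 K.
have ne12 : i1 != i2 by apply: contraTneq lt12 => ->; rewrite ltnn.
have e_small : 16 * (e / 4) ^+ 2 <= 1 - dot (v i1) (v i2) ^+ 2.
  have := e_le (i1, i2) ne12; have := sqr_ge0 (dot (v i1) (v i2)); nra.
have ballK := cball_sub_conv_hballs _ _ c1 c2 r _ (v1 i1) (v1 i2) c0_gt0 e_small.
exists (2^-1 *: (c1 + c2)); split; last exact: ballK.
by exists (e / 4 * r); split; [rewrite mulr_gt0 | exact: ballK].
Qed.
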